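(* Let $P$ be a finitary polynomial endofunctor and let $\mu$ be the Möbius function of the incidence bialgebra of $P$-trees. Then for every $P$-forest $T$, \[ \mu(T)=\begin{cases}(-1)^n & \text{if every connected component of $T$ is either a $P$-corolla or an isolated edge (nodeless tree), $n$ being the number of $P$-corollas},\\ 0&\text{otherwise.}\end{cases} \]
   Context: A finitary polynomial endofunctor $P:\mathbf{Grpd}_{/I}\to\mathbf{Grpd}_{/I}$ is given by a diagram of groupoids $I\leftarrow E\xrightarrow{p}B\to I$ such that the fibres of $p$ are finite. A $P$-tree is a finite rooted tree in the polynomial sense (it has a root edge and leaves, and may have no nodes, in which case it is a single edge) whose edges are decorated by objects of $I$ and nodes by objects of $B$, compatibly: a node decorated by $b$ has its outgoing edge decorated by the image of $b$ in $I$, and its incoming edges are in bijection with the fibre $p^{-1}(b)$ compatibly with the $I$-decorations. A $P$-corolla is a $P$-tree with exactly one node; an isolated edge is a nodeless $P$-tree. A $P$-forest is a finite disjoint union of $P$-trees. An admissible cut $c$ of a $P$-tree $T$ is a set of edges (possibly including leaves or the root edge) such that every path from a leaf to the root passes through exactly one edge of $c$; cutting each edge of $c$ in two yields a tree $R_c(T)$ containing the root and a forest $P^c(T)$ with one tree per edge of $c$. The incidence bialgebra of $P$-trees (the incidence bialgebra of the two-sided bar construction of the free monad on $P$) is spanned by isomorphism classes of $P$-forests, with product disjoint union and comultiplication $\Delta(T)=\sum_c P^c(T)\otimes R_c(T)$ on trees, extended multiplicatively; the counit is $\varepsilon(F)=1$ if $F$ has no nodes and $0$ otherwise. Its dual algebra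 consists of functions on isomorphism classes of $P$-forests with the dual convolution product; the zeta function is $\zeta\equiv1$ and the Möbius function $\mu$ is its convolution inverse. *)

From HB Require Import structures.
From mathcomp Require Import all_boot all_algebra.
Set Implicit Arguments. Unset Strict Implicit. Unset Printing Implicit Defensive.
Import GRing.Theory.
Local Open Scope ring_scope.

(* A finitary polynomial endofunctor  I <- E -> B -> I  of groupoids,
   recorded through its objects: [I] objects of I, [Iiso i j] = "i and j are
   isomorphic in the groupoid I", [B] objects of B, [E b] the (finite) fibre
   p^{-1}(b), [src b e] the image in I of e in the fibre, [tgt b] image of b in I. *)
Record polyFun := PolyFun {
  pI : Type;
  pIiso : pI -> pI -> Prop;
  pB : Type;
  pE : pB -> finType;
  psrc : forall b, pE b -> pI;
  ptgt : pB -> pI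
}.

Section Trees.
Variable P : polyFun.

(* Planar representatives of trees with edges decorated by I and nodes by B:
   [Edge i] is an isolated edge decorated by i; [Node i b ch] is a node
   decorated by b, whose outgoing (root) edge is decorated by i and whose
   incoming edges are the roots of the subtrees [ch]. *)
Inductive tree : Type :=
| Edge of pI P
| Node of pI P & pB P & seq tree.

Definition root_lab (T : tree) : pI P :=
  match T with Edge i => i | Node i _ _ => i end.

(* P-tree condition: the incoming edges of a node decorated by b are in
   bijection (via the enumeration of the fibre) with p^{-1}(b), compatibly
   with the I-decorations, and the outgoing edge is decorated by the image of b. *)
Fixpoint wf_tree (T : tree) : Prop :=
  match T with
  | Edge _ => True
  | Node i b ch =>
      [/\ pIiso (ptgt b) i,
          size ch = #|pE b|,
          (forall k : 'I_#|pE b|,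
              pIiso (psrc (enum_val k)) (root_lab (nth (Edge i) ch k)))
        & (fix wfl (l : seq tree) : Prop :=
             match l with [::] => True | c :: l' => wf_tree c /\ wfl l' end) ch]
  end.

Definition forest := seq tree.
Fixpoint wf_forest (F : forest) : Prop :=
  match F with [::] => True | T :: F' => wf_tree T /\ wf_forest F' end.

Fixpoint nnodes (T : tree) : nat :=
  match T with
  | Edge _ => 0
  | Node _ _ ch => (sumn (map nnodes ch)).+1
  end.

Definition nodeless (F : forest) : bool := all (fun T => nnodes T == 0)%N F.

Definition is_edge (T : tree) : bool := if T is Edge _ then true else false.
Definition is_corolla (T : tree) : bool :=
  if T is Node _ _ ch then all is_edge ch else false.

Fixpoint choices {A : Type} (ls : seq (seq A)) : seq (seq A) :=
  match ls with
  | [::] => [:: [::]]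
  | l :: ls' => [seq x :: r | x <- l, r <- choices ls']
  end.

(* All admissible cuts c of T, as pairs (P^c(T), R_c(T)). Either the root
   edge is cut (P^c = T, R_c = root edge), or T is a node and an admissible
   cut is chosen in each subtree. *)
Fixpoint cuts (T : tree) : seq (forest * tree) :=
  match T with
  | Edge i => [:: ([:: Edge i], Edge i)]
  | Node i b ch =>
      ([:: T], Edge i) ::
      [seq (flatten (map fst cs), Node i b (map snd cs))
      | cs <- choices (map cuts ch)]
  end.

(* Comultiplication extended multiplicatively to forests. *)
Definition fcuts (F : forest) : seq (forest * forest) :=
  [seq (flatten (map fst cs), map snd cs) | cs <- choices (map cuts F)].

Definition conv (R : nzRingType) (f g : forest -> R) (F : forest) : R :=
  \sum_(c <- fcuts F) f c.1 * g c.2.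

Definition zeta (R : nzRingType) (F : forest) : R := 1.
Definition counit (R : nzRingType) (F : forest) : R :=
  if nodeless F then 1 else 0.

End Trees.

(* The candidate [forest_mu] is multiplicative over the trees of a forest and
   takes the value 1 on an edge, -1 on a corolla and 0 on any other tree.
   Convolving it with zeta gives the counit: for a tree with a node, cutting
   the root edge leaves the trunk an edge (+1), cutting the incoming edges of
   the root node leaves a corolla (-1), and every other trunk contributes 0.
   Conversely zeta is left cancellable: in (zeta * f)(F) = sum_c f(R_c F) the
   only cut with a nodeless pruned forest is the cut at the leaves, whose trunk
   is F itself, and every other trunk has fewer nodes, so f is recovered from
   zeta * f by induction on the number of nodes.  Hence zeta * mu = counit
   alone determines mu. *)

From mathcomp Require Import all_boot all_algebra zify.
From Stdlib Require List.
Import GRing.Theory.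
Local Open Scope ring_scope.
Set Implicit Arguments. Unset Strict Implicit.

Lemma In_flatten {A} {x : A} {ss : seq (seq A)} :
  List.In x (flatten ss) -> exists2 s, List.In s ss & List.In x s.
Proof.
elim: ss => [|s ss IH] //= /(List.in_app_or _ _ _) [xs | /IH [t tss xt]].
  by exists s; first left.
by exists t; first right.
Qed.

Lemma In_map {A B} {f : A -> B} {y : B} {s : seq A} :
  List.In y (map f s) -> exists2 x, List.In x s & y = f x.
Proof.
elim: s => [|a s IH] //= [<- | /IH [x xs ->]]; first by exists a; first left.
by exists x; first right.
Qed.

Lemma choices_Forall2 A B (h : B -> seq A) (Q : A -> B -> Prop) s cs :
  (forall t, List.In t s -> forall x, List.In x (h t) -> Q x t) ->
  List.In cs (choices (map h s)) -> List.Forall2 Q cs s.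
Proof.
elim: s cs => [|t s IH] cs hQ /=; first by case=> [<- | []].
case/In_flatten=> _ /In_map [x xt ->] /In_map [r rs ->].
constructor; first exact: hQ (or_introl erefl) _ xt.
by apply: IH rs => u us; apply: hQ; right.
Qed.

Lemma eq_big_In {R} {idx : R} {op : R -> R -> R} {I} {s : seq I} {F1 F2 : I -> R} :
  (forall x, List.In x s -> F1 x = F2 x) ->
  \big[op/idx]_(x <- s) F1 x = \big[op/idx]_(x <- s) F2 x.
Proof.
elim: s => [|a s IH] eqF; first by rewrite !big_nil.
by rewrite !big_cons eqF ?IH // => [x xs|]; [apply: eqF; right | left].
Qed.

Lemma big_choices (R : pzSemiRingType) A (ls : seq (seq A)) (h : A -> R) :
  \sum_(cs <- choices ls) \prod_(x <- cs) h x = \prod_(l <- ls) \sum_(x <- l) h x.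
Proof.
elim: ls => [|l ls IH] /=; first by rewrite !big_cons !big_nil addr0.
rewrite big_allpairs_dep big_cons mulr_suml; apply: eq_bigr => x _.
by rewrite -IH mulr_sumr; apply: eq_bigr => r _; rewrite big_cons.
Qed.

Lemma natr_all (R : pzSemiRingType) A (p : pred A) (s : seq A) :
  (all p s)%:R = \prod_(x <- s) (p x)%:R :> R.
Proof.
elim: s => [|a s IH] /=; first by rewrite big_nil.
by rewrite big_cons -IH; case: (p a); rewrite ?mul1r ?mul0r.
Qed.

Section Cuts.
Variable P : polyFun.
Implicit Types (T : tree P) (F ch : forest P) (i : pI P) (b : pB P).

Definition tree_nested_ind (Q : tree P -> Prop) (HE : forall i, Q (Edge i))
    (HN : forall i b ch, List.Forall Q ch -> Q (Node i b ch)) : forall T, Q T :=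
  fix IH T := match T with
  | Edge i => HE i
  | Node i b ch => HN i b ch
      ((fix IHch l := match l return List.Forall Q l with
        | [::] => List.Forall_nil _
        | U :: l' => List.Forall_cons U (IH U) (IHch l')
        end) ch)
  end.

Definition fnnodes F : nat := \sum_(T <- F) nnodes T.

Lemma fnnodes_cons T F : fnnodes (T :: F) = (nnodes T + fnnodes F)%N.
Proof. exact: big_cons. Qed.

Lemma fnnodes_cat F1 F2 : fnnodes (F1 ++ F2) = (fnnodes F1 + fnnodes F2)%N.
Proof. exact: big_cat. Qed.

Lemma nnodes_Node i b ch : nnodes (Node i b ch) = (fnnodes ch).+1.
Proof. by rewrite /= sumnE big_map. Qed.

Lemma nodelessE F : nodeless F = (fnnodes F == 0)%N.
Proof. by rewrite /fnnodes sum_nat_seq_eq0. Qed.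

Lemma nodeless_flatten (Fs : seq (forest P)) :
  nodeless (flatten Fs) = all (@nodeless P) Fs.
Proof. by elim: Fs => //= F Fs IH; rewrite /nodeless all_cat -IH. Qed.

Lemma cuts_Node i b ch :
  cuts (Node i b ch) =
  ([:: Node i b ch], Edge i) :: [seq (c.1, Node i b c.2) | c <- fcuts ch].
Proof. by rewrite /= /fcuts -map_comp. Qed.

Lemma wf_forest_In F T : wf_forest F -> List.In T F -> wf_tree T.
Proof. by elim: F => //= U F IH [wfU wfF] [<- | /IH]; auto. Qed.

Lemma In_cuts_Node i b ch c : List.In c (cuts (Node i b ch)) ->
  c = ([:: Node i b ch], Edge i) \/
  exists2 d, List.In d (fcuts ch) & c = (d.1, Node i b d.2).
Proof. by rewrite cuts_Node => -[<- | /In_map]; [left | right]. Qed.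

Lemma In_fcuts (Q : forest P * tree P -> tree P -> Prop) F c :
  (forall T, List.In T F -> forall d, List.In d (cuts T) -> Q d T) ->
  List.In c (fcuts F) ->
  exists2 cs, List.Forall2 Q cs F & c = (flatten (map fst cs), map snd cs).
Proof. by move=> hQ /In_map [cs /(choices_Forall2 hQ) ? ->]; exists cs. Qed.

Lemma cuts_root T c : List.In c (cuts T) -> root_lab c.2 = root_lab T.
Proof. by case: T => [i [<- | []] | i b ch /In_cuts_Node [-> | [d _ ->]]]. Qed.

(* The [_of] lemmas lift a statement about the cuts of each tree of [F] to the
   cuts of [F]; they serve both the inductive step on the children of a node
   and the final statement about forests. *)
Lemma fcuts_fnnodes_of F c :
  (forall T, List.In T F -> forall d, List.In d (cuts T) ->
     fnnodes d.1 + nnodes d.2 = nnodes T)%N ->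
  List.In c (fcuts F) -> (fnnodes c.1 + fnnodes c.2 = fnnodes F)%N.
Proof.
move=> /In_fcuts /[apply] -[cs + ->] /=.
elim=> [|d T cs' F' eqd _ IH] /=; first by rewrite /fnnodes !big_nil.
by rewrite fnnodes_cat !fnnodes_cons -eqd -IH addnACA.
Qed.

Lemma cuts_nnodes T c :
  List.In c (cuts T) -> (fnnodes c.1 + nnodes c.2 = nnodes T)%N.
Proof.
elim/tree_nested_ind: T c => [i c [<- | []] | i b ch /List.Forall_forall IH c].
  by rewrite /fnnodes big_seq1.
case/In_cuts_Node=> [-> | [d din ->]]; first by rewrite /= addn0 /fnnodes big_seq1.
by rewrite !nnodes_Node addnS (fcuts_fnnodes_of IH).
Qed.

Lemma fcuts_nodeless_of F c :
  (forall T, List.In T F -> forall d, List.In d (cuts T) ->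
     nodeless d.1 -> d.2 = T) ->
  List.In c (fcuts F) -> nodeless c.1 -> c.2 = F.
Proof.
move=> /In_fcuts /[apply] -[cs + ->] /=.
elim=> [|d T cs' F' eqd _ IH] //=.
by rewrite /nodeless all_cat => /andP [/eqd -> /IH ->].
Qed.

Lemma cuts_nodeless T c : List.In c (cuts T) -> nodeless c.1 -> c.2 = T.
Proof.
elim/tree_nested_ind: T c => [i c [<- | []] // | i b ch /List.Forall_forall IH c].
by case/In_cuts_Node=> [-> | [d din ->]] //= /(fcuts_nodeless_of IH din) ->.
Qed.

Lemma fcuts_wf_of F c :
  (forall T, List.In T F -> forall d, List.In d (cuts T) ->
     wf_tree d.2 /\ root_lab d.2 = root_lab T) ->
  List.In c (fcuts F) ->
  [/\ wf_forest c.2, size c.2 = size F & map (@root_lab P) c.2 = map (@root_lab P) F].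
Proof.
move=> /In_fcuts /[apply] -[cs + ->] /=.
elim=> [|d T cs' F' [wfd rootd] _ [wfcs eqsize eqroot]] //=.
by rewrite eqsize eqroot rootd.
Qed.

Lemma cuts_wf T c : wf_tree T -> List.In c (cuts T) -> wf_tree c.2.
Proof.
elim/tree_nested_ind: T c => [i c _ [<- | []] // | i b ch /List.Forall_forall IH c].
move=> [tgt_i size_ch root_ch wf_ch] /In_cuts_Node [-> | [d din ->]] //=.
have [wf_d size_d root_d] := fcuts_wf_of (fun T Tch e ein =>
  conj (IH T Tch e (wf_forest_In wf_ch Tch) ein) (cuts_root ein)) din.
split=> // [|k]; first by rewrite size_d.
have ltk : (k < size ch)%N by rewrite size_ch.
by rewrite -(nth_map (Edge i) (root_lab (Edge i))) ?size_d // root_d (nth_map (Edge i)).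
Qed.

Lemma fcuts_trunk F c : wf_forest F -> List.In c (fcuts F) ->
  wf_forest c.2 /\ (if nodeless c.1 then c.2 = F else fnnodes c.2 < fnnodes F)%N.
Proof.
move=> wfF cF; split.
  have wf_of T (TF : List.In T F) d (dT : List.In d (cuts T)) :=
    conj (cuts_wf (wf_forest_In wfF TF) dT) (cuts_root dT).
  by case: (fcuts_wf_of wf_of cF).
case: ifPn; first exact: fcuts_nodeless_of (fun T _ => @cuts_nodeless T) cF.
rewrite nodelessE -(fcuts_fnnodes_of (fun T _ => @cuts_nnodes T) cF); lia.
Qed.

Lemma big_fcuts (R : pzSemiRingType) (g : forest P * forest P -> R)
    (h : forest P * tree P -> R) F :
  (forall cs, g (flatten (map fst cs), map snd cs) = \prod_(d <- cs) h d) ->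
  \sum_(c <- fcuts F) g c = \prod_(T <- F) \sum_(d <- cuts T) h d.
Proof.
by move=> gE; rewrite big_map (eq_bigr _ (fun cs _ => gE cs)) big_choices big_map.
Qed.

Lemma nodeless_fcutE (R : pzSemiRingType) (cs : seq (forest P * tree P)) :
  (nodeless (flatten (map fst cs)))%:R = \prod_(d <- cs) (nodeless d.1)%:R :> R.
Proof. by rewrite nodeless_flatten all_map natr_all. Qed.

Lemma sum_cuts_nodeless (R : pzSemiRingType) T :
  \sum_(c <- cuts T) (nodeless c.1)%:R = 1 :> R.
Proof.
elim/tree_nested_ind: T => [i | i b ch /List.Forall_forall IH].
  by rewrite big_seq1.
rewrite cuts_Node big_cons big_map /= add0r.
rewrite (big_fcuts (h := fun d => (nodeless d.1)%:R)) => [|cs]; last exact: nodeless_fcutE.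
by rewrite (eq_big_In IH) big1_eq.
Qed.

Lemma sum_fcuts_nodeless (R : pzSemiRingType) F :
  \sum_(c <- fcuts F) (nodeless c.1)%:R = 1 :> R.
Proof.
rewrite (big_fcuts (h := fun d => (nodeless d.1)%:R)) => [|cs]; last exact: nodeless_fcutE.
by rewrite big1 // => T _; apply: sum_cuts_nodeless.
Qed.

End Cuts.

Section Mobius.
Variables (P : polyFun) (R : nzRingType).
Implicit Types (T : tree P) (F : forest P).

Lemma conv_zetaE (f : forest P -> R) F :
  conv (@zeta P R) f F = \sum_(c <- fcuts F) f c.2.
Proof. by apply: eq_bigr => c _; rewrite mul1r. Qed.

Lemma conv_zeta_inj (f g : forest P -> R) :
  (forall F, wf_forest F -> conv (@zeta P R) f F = conv (@zeta P R) g F) ->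
  forall F, wf_forest F -> f F = g F.
Proof.
move=> eq_conv F; have [n] := ubnP (fnnodes F); elim: n => // n IH in F *.
rewrite ltnS => leFn wfF.
have trunkE c : List.In c (fcuts F) ->
    f c.2 - g c.2 = (nodeless c.1)%:R * (f F - g F).
  move=> cF; have [wf_c] := fcuts_trunk wfF cF.
  case: ifP => _ => [-> | lt_cF]; first by rewrite mul1r.
  by rewrite mul0r IH ?subrr // (leq_trans lt_cF).
apply/eqP; rewrite -subr_eq0 -[f F - g F]mul1r -(sum_fcuts_nodeless R F).
by rewrite mulr_suml -(eq_big_In trunkE) sumrB -!conv_zetaE eq_conv ?subrr.
Qed.

Definition tree_mu T : R :=
  if T is Node _ _ ch then (if all (@is_edge P) ch then -1 else 0) else 1.

Definition forest_mu F : R := \prod_(T <- F) tree_mu T.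

Lemma forest_muE F :
  forest_mu F = if all (fun T => is_corolla T || is_edge T) F
                then (-1) ^+ count (@is_corolla P) F else 0.
Proof.
elim: F => [|T F IH]; first by rewrite /forest_mu big_nil.
rewrite /forest_mu big_cons -/(forest_mu F) IH.
case: T => [i | i b ch] /=; first by rewrite mul1r.
case: (all _ ch) => /=; last by rewrite mul0r.
by case: (all _ F); rewrite ?mulr0 // add1n exprS.
Qed.

Lemma sum_cuts_is_edge T : \sum_(c <- cuts T) (is_edge c.2)%:R = 1 :> R.
Proof.
case: T => [i | i b ch]; first by rewrite big_seq1.
by rewrite cuts_Node big_cons big_map big1 ?addr0.
Qed.

Lemma sum_cuts_tree_mu T : \sum_(c <- cuts T) tree_mu c.2 = (nnodes T == 0)%:R.
Proof.
case: T => [i | i b ch]; first by rewrite big_seq1.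
rewrite cuts_Node big_cons big_map /=.
have mu_trunk (l : forest P) :
    (if all (@is_edge P) l then -1 else 0) = - (all (@is_edge P) l)%:R :> R.
  by case: all; rewrite ?oppr0.
rewrite (eq_bigr _ (fun c _ => mu_trunk c.2)) sumrN.
rewrite (big_fcuts (h := fun d => (is_edge d.2)%:R)) => [|cs]; last first.
  by rewrite /= all_map natr_all.
by rewrite big1 ?subrr // => T _; apply: sum_cuts_is_edge.
Qed.

Lemma counitE F : counit R F = \prod_(T <- F) (nnodes T == 0)%:R.
Proof. by rewrite -natr_all /counit /nodeless; case: all. Qed.

Lemma conv_zeta_forest_mu F : conv (@zeta P R) forest_mu F = counit R F.
Proof.
rewrite conv_zetaE counitE.
rewrite (big_fcuts (h := fun d => tree_mu d.2)) => [|cs]; last first.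
  by rewrite /forest_mu big_map.
by apply: eq_bigr => T _; apply: sum_cuts_tree_mu.
Qed.

End Mobius.

Unset Implicit Arguments.

Theorem corollary3p7 (P : polyFun) (R : nzRingType) (mu : forest P -> R)
  (Hl : forall F : forest P, wf_forest F -> conv mu (@zeta P R) F = counit R F)
  (Hr : forall F : forest P, wf_forest F -> conv (@zeta P R) mu F = counit R F) :
  forall F : forest P, wf_forest F ->
    mu F = if all (fun T => is_corolla T || is_edge T) F
           then (-1) ^+ count (@is_corolla P) F else 0.
Proof.
move=> F wfF; rewrite -forest_muE.
by apply: conv_zeta_inj wfF => G wfG; rewrite Hr // conv_zeta_forest_mu.
Qed.
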